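(* The behaviour bifunctor $B$ of \textbf{xTCL} has a locally final coalgebra $z\colon Z\to B(Z,Z)$, unique up to isomorphism. Moreover, there is a $\Sigma$-algebra structure $a\colon\Sigma Z\to Z$ such that $(Z,a,z)$ is a $\rho$-bialgebra, and it is adequate for strong applicative bisimilarity: if $\llbracket-\rrbracket\colon\mathsf{Tr}\to Z$ is the unique $\Sigma$-algebra morphism, then for all $\tau\in\mathsf{Ty}$ and $p,q\in\mathsf{Tr}_\tau$, $\llbracket p\rrbracket_\tau=\llbracket q\rrbracket_\tau$ implies $p\sim_\tau q$.
   Context: Types: $\tau::=\mathsf{unit}\mid\tau\to\tau$. $\Sigma$ is the $\mathsf{Ty}$-sorted signature (and induced polynomial endofunctor on $\mathbf{Set}^{\mathsf{Ty}}$) with, for all types: $\mathsf{e}\colon\mathsf{unit}$; $\mathsf{app}_{\tau_1,\tau_2}\colon(\tau_1\to\tau_2)\times\tau_1\to\tau_2$ (written $s\,t$); constants $S_{\tau_1,\tau_2,\tau_3}\colon(\tau_1\to\tau_2\to\tau_3)\to(\tau_1\to\tau_2)\to\tau_1\to\tau_3$, $K_{\tau_1,\tau_2}\colon\tau_1\to\tau_2\to\tau_1$, $I_\tau\colon\tau\to\tau$; and $S'\colon(\tau_1\to\tau_2\to\tau_3)\to((\tau_1\to\tau_2)\to\tau_1\to\tau_3)$, $S''\colon(\tau_1\to\tau_2\to\tau_3)\times(\tau_1\to\tau_2)\to(\tau_1\to\tau_3)$, $K'\colon\tau_1\to(\tau_2\to\tau_1)$. $\mathsf{Tr}=\mu\Sigma$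 is the sorted set of closed terms. $B(X,Y)$ is given by $B_{\mathsf{unit}}(X,Y)=Y_{\mathsf{unit}}+1$, $B_{\tau_1\to\tau_2}(X,Y)=Y_{\tau_1\to\tau_2}+Y_{\tau_2}^{X_{\tau_1}}$. A higher-order coalgebra is $c\colon C\to B(C,C)$; it is locally final if it is a final coalgebra for the endofunctor $B(C,-)$. The higher-order GSOS law $\rho_{X,Y}\colon\Sigma(X\times B(X,Y))\to B(X,\Sigma^\star(X+Y))$ ($\Sigma^\star$ the free-term monad; injections and units left implicit) is: $\mathsf{e}\mapsto *$; $S\mapsto\lambda t.\,S'(t)$; $S'(p,\_)\mapsto\lambda t.\,S''(p,t)$; $S''((p,\_),(q,\_))\mapsto\lambda t.\,(p\,t)\,(q\,t)$; $K\mapsto\lambda t.\,K'(t)$; $K'(p,\_)\mapsto\lambda t.\,p$; $I\mapsto\lambda t.\,t$; $\mathsf{app}((p,f),(q,\_))\mapsto f(q)$ if $f\in Y_{\tau_2}^{X_{\tau_1}}$ and $\mapsto\mathsf{app}(f,q)$ if $f\in Y_{\tau_1\to\tau_2}$ (both in the left summand of $B_{\tau_2}$); functions $\lambda t.(\dots)$ land in the right summand. A $\rho$-bialgebra is $(X,a,c)$ with $c\cdot a=B(\mathrm{id},\hat a\cdot\Sigma^\star\nabla)\cdot\rho_{X,X}\cdot\Sigma\langle\mathrm{id},c\rangle$, where $\hat a\colon\Sigma^\star X\to X$ evaluates terms. Transitions on $\mathsf{Tr}$: $S\xrightarrow{t}S'(t)$, $S'(p)\xrightarrow{t}S''(p,t)$,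 $S''(p,q)\xrightarrow{t}(p\,t)\,(q\,t)$, $K\xrightarrow{t}K'(t)$, $K'(p)\xrightarrow{t}p$, $I\xrightarrow{t}t$, $\mathsf{e}\xrightarrow{\checkmark}$; if $p\to p'$ then $p\,q\to p'\,q$; if $p\xrightarrow{q}p'$ then $p\,q\to p'$. Strong applicative bisimilarity $\sim=(\sim_\tau)$ is the greatest $\mathsf{Ty}$-indexed equivalence relation on $\mathsf{Tr}$ such that: if $p\sim_{\mathsf{unit}}q$ and $p\to p'$ then $q\to q'$ with $p'\sim_{\mathsf{unit}}q'$; if $p\sim_{\mathsf{unit}}q$ and $p\xrightarrow{\checkmark}$ then $q\xrightarrow{\checkmark}$; if $p\sim_{\tau_1\to\tau_2}q$ and $p\to p'$ then $q\to q'$ with $p'\sim_{\tau_1\to\tau_2}q'$; if $p\sim_{\tau_1\to\tau_2}q$ and $p\xrightarrow{t}p'$ then $q\xrightarrow{t}q'$ with $p'\sim_{\tau_2}q'$. *)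

From Stdlib Require Import RelationClasses.

Inductive Ty : Type := Tunit : Ty | Tarr : Ty -> Ty -> Ty.

Definition SSet := Ty -> Type.
Definition SSum (X Y : SSet) : SSet := fun t => (X t + Y t)%type.
Definition SProd (X Y : SSet) : SSet := fun t => (X t * Y t)%type.
Definition Void : SSet := fun _ => Empty_set.

Inductive Sig (X : SSet) : Ty -> Type :=
| Se : Sig X Tunit
| Sapp (t1 t2 : Ty) : X (Tarr t1 t2) -> X t1 -> Sig X t2
| SS (t1 t2 t3 : Ty) :
    Sig X (Tarr (Tarr t1 (Tarr t2 t3)) (Tarr (Tarr t1 t2) (Tarr t1 t3)))
| SS1 (t1 t2 t3 : Ty) : X (Tarr t1 (Tarr t2 t3)) -> Sig X (Tarr (Tarr t1 t2) (Tarr t1 t3))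
| SS2 (t1 t2 t3 : Ty) : X (Tarr t1 (Tarr t2 t3)) -> X (Tarr t1 t2) -> Sig X (Tarr t1 t3)
| SK (t1 t2 : Ty) : Sig X (Tarr t1 (Tarr t2 t1))
| SK1 (t1 t2 : Ty) : X t1 -> Sig X (Tarr t2 t1)
| SI (t : Ty) : Sig X (Tarr t t).

Arguments Se {X}.
Arguments Sapp {X t1 t2}.
Arguments SS {X}.
Arguments SS1 {X t1 t2 t3}.
Arguments SS2 {X t1 t2 t3}.
Arguments SK {X}.
Arguments SK1 {X t1} t2.
Arguments SI {X}.

Definition Sig_map {X Y : SSet} (f : forall t, X t -> Y t) (t : Ty) (s : Sig X t) : Sig Y t :=
  match s in Sig _ t0 return Sig Y t0 with
  | Se => Se
  | Sapp p q => Sapp (f _ p) (f _ q)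
  | SS t1 t2 t3 => SS t1 t2 t3
  | SS1 p => SS1 (f _ p)
  | SS2 p q => SS2 (f _ p) (f _ q)
  | SK t1 t2 => SK t1 t2
  | SK1 t2 p => SK1 t2 (f _ p)
  | SI t0 => SI t0
  end.

Definition Alg (X : SSet) := forall t, Sig X t -> X t.

Definition is_alg_hom {X Y : SSet} (a : Alg X) (b : Alg Y) (h : forall t, X t -> Y t) : Prop :=
  forall t (s : Sig X t), h t (a t s) = b t (Sig_map h t s).

Inductive Term (V : SSet) : Ty -> Type :=
| var (t : Ty) : V t -> Term V t
| Te : Term V Tunit
| Tapp (t1 t2 : Ty) : Term V (Tarr t1 t2) -> Term V t1 -> Term V t2
| TS (t1 t2 t3 : Ty) :
    Term V (Tarr (Tarr t1 (Tarr t2 t3)) (Tarr (Tarr t1 t2) (Tarr t1 t3)))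
| TS1 (t1 t2 t3 : Ty) : Term V (Tarr t1 (Tarr t2 t3)) -> Term V (Tarr (Tarr t1 t2) (Tarr t1 t3))
| TS2 (t1 t2 t3 : Ty) : Term V (Tarr t1 (Tarr t2 t3)) -> Term V (Tarr t1 t2) -> Term V (Tarr t1 t3)
| TK (t1 t2 : Ty) : Term V (Tarr t1 (Tarr t2 t1))
| TK1 (t1 t2 : Ty) : Term V t1 -> Term V (Tarr t2 t1)
| TI (t : Ty) : Term V (Tarr t t).

Arguments var {V t}.
Arguments Te {V}.
Arguments Tapp {V t1 t2}.
Arguments TS {V}.
Arguments TS1 {V t1 t2 t3}.
Arguments TS2 {V t1 t2 t3}.
Arguments TK {V}.
Arguments TK1 {V t1} t2.
Arguments TI {V}.

Definition op (V : SSet) : Alg (Term V) := fun t s =>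
  match s in Sig _ t0 return Term V t0 with
  | Se => Te
  | Sapp p q => Tapp p q
  | SS t1 t2 t3 => TS t1 t2 t3
  | SS1 p => TS1 p
  | SS2 p q => TS2 p q
  | SK t1 t2 => TK t1 t2
  | SK1 t2 p => TK1 t2 p
  | SI t0 => TI t0
  end.

Fixpoint tfold {V A : SSet} (a : Alg A) (v : forall t, V t -> A t) (t : Ty) (u : Term V t) : A t :=
  match u in Term _ t0 return A t0 with
  | var x => v _ x
  | Te => a _ Se
  | Tapp p q => a _ (Sapp (tfold a v _ p) (tfold a v _ q))
  | TS t1 t2 t3 => a _ (SS t1 t2 t3)
  | TS1 p => a _ (SS1 (tfold a v _ p))
  | TS2 p q => a _ (SS2 (tfold a v _ p) (tfold a v _ q))
  | TK t1 t2 => a _ (SK t1 t2)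
  | TK1 t2 p => a _ (SK1 t2 (tfold a v _ p))
  | TI t0 => a _ (SI t0)
  end.

Definition eval {X : SSet} (a : Alg X) : forall t, Term X t -> X t := tfold a (fun _ x => x).
Definition Term_map {V W : SSet} (f : forall t, V t -> W t) : forall t, Term V t -> Term W t :=
  tfold (op W) (fun t x => var (f t x)).
Definition nabla (X : SSet) : forall t, SSum X X t -> X t :=
  fun t x => match x with inl y => y | inr y => y end.

Definition Tr : SSet := Term Void.

Definition BR (X Y : SSet) (t : Ty) : Type :=
  match t with
  | Tunit => unit
  | Tarr t1 t2 => X t1 -> Y t2
  end.
Definition B (X Y : SSet) (t : Ty) : Type := (Y t + BR X Y t)%type.

Definition BRmap {X X' Y Y' : SSet} (f : forall t, X' t -> X t) (g : forall t, Y t -> Y' t)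
  (t : Ty) : BR X Y t -> BR X' Y' t :=
  match t as t0 return BR X Y t0 -> BR X' Y' t0 with
  | Tunit => fun u => u
  | Tarr t1 t2 => fun h x => g t2 (h (f t1 x))
  end.

Definition Bmap {X X' Y Y' : SSet} (f : forall t, X' t -> X t) (g : forall t, Y t -> Y' t)
  (t : Ty) (b : B X Y t) : B X' Y' t :=
  match b with
  | inl y => inl (g t y)
  | inr r => inr (BRmap f g t r)
  end.

Definition HCoalg (C : SSet) := forall t, C t -> B C C t.

Definition is_Bcoalg_hom {C D : SSet} (c : HCoalg C) (d : forall t, D t -> B C D t)
  (h : forall t, D t -> C t) : Prop :=
  forall t (x : D t), c t (h t x) = Bmap (fun _ y => y) h t (d t x).

Definition locally_final {C : SSet} (c : HCoalg C) : Prop :=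
  forall (D : SSet) (d : forall t, D t -> B C D t),
    exists h : forall t, D t -> C t,
      is_Bcoalg_hom c d h /\
      forall h' : forall t, D t -> C t, is_Bcoalg_hom c d h' -> forall t x, h' t x = h t x.

Definition hcoalg_iso {Z Z' : SSet} (z : HCoalg Z) (z' : HCoalg Z')
  (f : forall t, Z t -> Z' t) (g : forall t, Z' t -> Z t) : Prop :=
  (forall t x, g t (f t x) = x) /\ (forall t y, f t (g t y) = y) /\
  (forall t x, z' t (f t x) = Bmap g f t (z t x)).

Definition rho (X Y : SSet) (t : Ty) (s : Sig (SProd X (B X Y)) t) : B X (Term (SSum X Y)) t :=
  match s in Sig _ t0 return B X (Term (SSum X Y)) t0 with
  | Se => inr tt
  | @Sapp _ t1 t2 pf qg =>
      let (p, f) := pf in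
      let (q, _) := qg in
      match f with
      | inl p' => inl (Tapp (var (inr p')) (var (inl q)))
      | inr g => inl (var (inr (g q)))
      end
  | SS t1 t2 t3 => inr (fun x => TS1 (var (inl x)))
  | SS1 pf => let (p, _) := pf in inr (fun x => TS2 (var (inl p)) (var (inl x)))
  | SS2 pf qg => let (p, _) := pf in let (q, _) := qg in
      inr (fun x => Tapp (Tapp (var (inl p)) (var (inl x))) (Tapp (var (inl q)) (var (inl x))))
  | SK t1 t2 => inr (fun x => TK1 t2 (var (inl x)))
  | SK1 t2 pf => let (p, _) := pf in inr (fun _ => var (inl p))
  | SI t0 => inr (fun x => var (inl x))
  end.

Definition is_rho_bialgebra {X : SSet} (a : Alg X) (c : HCoalg X) : Prop :=
  forall t (s : Sig X t),
    c t (a t s) =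
    Bmap (fun _ y => y) (fun t0 u => eval a t0 (Term_map (nabla X) t0 u)) t
      (rho X X t (Sig_map (fun t0 x => (x, c t0 x) : SProd X (B X X) t0) t s)).

Inductive tstep : forall {t}, Tr t -> Tr t -> Prop :=
| tstep_app1 (t1 t2 : Ty) (p p' : Tr (Tarr t1 t2)) (q : Tr t1) :
    tstep p p' -> tstep (Tapp p q) (Tapp p' q)
| tstep_app2 (t1 t2 : Ty) (p : Tr (Tarr t1 t2)) (q : Tr t1) (p' : Tr t2) :
    lstep p q p' -> tstep (Tapp p q) p'
with lstep : forall {t1 t2}, Tr (Tarr t1 t2) -> Tr t1 -> Tr t2 -> Prop :=
| lstep_S (t1 t2 t3 : Ty) (u : Tr (Tarr t1 (Tarr t2 t3))) :
    lstep (TS t1 t2 t3) u (TS1 u)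
| lstep_S1 (t1 t2 t3 : Ty) (p : Tr (Tarr t1 (Tarr t2 t3))) (u : Tr (Tarr t1 t2)) :
    lstep (TS1 p) u (TS2 p u)
| lstep_S2 (t1 t2 t3 : Ty) (p : Tr (Tarr t1 (Tarr t2 t3))) (q : Tr (Tarr t1 t2)) (u : Tr t1) :
    lstep (TS2 p q) u (Tapp (Tapp p u) (Tapp q u))
| lstep_K (t1 t2 : Ty) (u : Tr t1) :
    lstep (TK t1 t2) u (TK1 t2 u)
| lstep_K1 (t1 t2 : Ty) (p : Tr t1) (u : Tr t2) :
    lstep (TK1 t2 p) u p
| lstep_I (t : Ty) (u : Tr t) :
    lstep (TI t) u u.

Inductive term_ok : Tr Tunit -> Prop :=
| term_ok_e : term_ok Te.

Definition is_sab (R : forall t, Tr t -> Tr t -> Prop) : Prop :=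
  (forall t, Equivalence (R t)) /\
  (forall t (p q p' : Tr t), R t p q -> tstep p p' -> exists q', tstep q q' /\ R t p' q') /\
  (forall p q : Tr Tunit, R Tunit p q -> term_ok p -> term_ok q) /\
  (forall t1 t2 (p q : Tr (Tarr t1 t2)) (u : Tr t1) (p' : Tr t2),
      R (Tarr t1 t2) p q -> lstep p u p' -> exists q', lstep q u q' /\ R t2 p' q').

Definition sab_sim (t : Ty) (p q : Tr t) : Prop :=
  exists R, is_sab R /\ R t p q.

From Stdlib Require Import Classical ClassicalEpsilon FunctionalExtensionality.

(* The behaviour functor acts at sort t as X |-> X_t + BR(C, X)_t, and BR only
   involves X at the codomain sort, which is structurally smaller.  Hence a
   higher-order coalgebra c is locally final iff every component c_t is a final
   coalgebra of X |-> X + BR(C, C)_t.  The final coalgebra of X |-> X + A is the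
   delay type: a state either diverges or, after n silent steps, exhibits some
   a : A.  So Z_t := delay (BR(Z, Z)_t), defined by recursion on types, is locally
   final, and any two locally final coalgebras are isomorphic by induction on
   types.  Interpreting application as "run the function, then take one more
   silent step" makes Z a rho-bialgebra, and by progress of closed terms the
   kernel of the interpretation is a strong applicative bisimulation. *)

Definition map_inr {X A A' : Type} (phi : A -> A') (u : X + A) : X + A' :=
  match u with inl x => inl x | inr a => inr (phi a) end.

Definition sum_coalg_hom {A X Y : Type} (o : X -> X + A) (s : Y -> Y + A) (f : Y -> X) : Prop :=
  forall y, o (f y) = match s y with inl y' => inl (f y') | inr a => inr a end.

Definition sum_final {A X : Type} (o : X -> X + A) : Prop :=
  forall (Y : Type) (s : Y -> Y + A),
    exists f, sum_coalg_hom o s f /\ forall g, sum_coalg_hom o s g -> forall y, g y = f y.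

Section SumFinal.
Context {A X : Type} {o : X -> X + A} (Ho : sum_final o).

Definition sum_corec {Y : Type} (s : Y -> Y + A) : Y -> X :=
  proj1_sig (constructive_indefinite_description _ (Ho Y s)).

Lemma sum_corec_hom {Y : Type} (s : Y -> Y + A) : sum_coalg_hom o s (sum_corec s).
Proof.
  exact (proj1 (proj2_sig (constructive_indefinite_description _ (Ho Y s)))).
Qed.

Lemma sum_corec_unique {Y : Type} (s : Y -> Y + A) (g : Y -> X) :
  sum_coalg_hom o s g -> forall y, g y = sum_corec s y.
Proof.
  exact (proj2 (proj2_sig (constructive_indefinite_description _ (Ho Y s))) g).
Qed.

Lemma sum_final_endo_id (k : X -> X) : sum_coalg_hom o o k -> forall x, k x = x.
Proof.
  intros Hk x.
  rewrite (sum_corec_unique o k Hk x).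
  symmetry; apply (sum_corec_unique o (fun x => x)).
  intro y; destruct (o y); reflexivity.
Qed.

End SumFinal.

Lemma sum_corec_inverse {A A' X X' : Type} {o : X -> X + A} {o' : X' -> X' + A'}
  (Ho : sum_final o) (Ho' : sum_final o') (phi : A -> A') (psi : A' -> A) :
  (forall a, psi (phi a) = a) ->
  forall x,
    sum_corec Ho (fun y => map_inr psi (o' y)) (sum_corec Ho' (fun x => map_inr phi (o x)) x) = x.
Proof.
  intros Hpsi; apply (sum_final_endo_id Ho); intro x.
  rewrite sum_corec_hom, sum_corec_hom.
  destruct (o x); simpl; rewrite ?Hpsi; reflexivity.
Qed.

Definition delay (A : Type) : Type := option (nat * A).

Definition delay_out {A : Type} (w : delay A) : delay A + A :=
  match w with
  | None => inl None
  | Some (0, a) => inr a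
  | Some (S n, a) => inl (Some (n, a))
  end.

Definition delay_later {A : Type} (w : delay A) : delay A :=
  match w with None => None | Some (n, a) => Some (S n, a) end.

Lemma delay_out_later {A : Type} (w : delay A) : delay_out (delay_later w) = inl w.
Proof. destruct w as [[]|]; reflexivity. Qed.

Section DelayFinal.
Context {A Y : Type} (s : Y -> Y + A).

Inductive converges : nat -> Y -> A -> Prop :=
| converges_now y a : s y = inr a -> converges 0 y a
| converges_later n y y' a : s y = inl y' -> converges n y' a -> converges (S n) y a.

Definition run_of (y : Y) (w : delay A) : Prop :=
  match w with
  | Some (n, a) => converges n y a
  | None => forall n a, ~ converges n y a
  end.

Lemma converges_functional n m y a b : converges n y a -> converges m y b -> n = m /\ a = b.
Proof.
  intros H; revert m b; induction H as [y a E|n y y' a E _ IH]; intros m b H';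
    destruct H' as [y b E'|m y y'' b E' H']; rewrite E in E'; try discriminate.
  - injection E'; auto.
  - injection E' as <-. destruct (IH _ _ H'); subst; auto.
Qed.

Lemma run_of_functional y w w' : run_of y w -> run_of y w' -> w = w'.
Proof.
  destruct w as [[n a]|], w' as [[m b]|]; simpl; intros H H'.
  - destruct (converges_functional _ _ _ _ _ H H'); subst; reflexivity.
  - destruct (H' _ _ H).
  - destruct (H _ _ H').
  - reflexivity.
Qed.

Lemma run_of_exists y : exists w, run_of y w.
Proof.
  destruct (classic (exists n a, converges n y a)) as [[n [a H]]|H].
  - exists (Some (n, a)); exact H.
  - exists None; intros n a Hc; apply H; eauto.
Qed.

Lemma run_of_later y y' w : s y = inl y' -> run_of y' w -> run_of y (delay_later w).
Proof.
  intros E; destruct w as [[n a]|]; simpl; intros H.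
  - econstructor; eassumption.
  - intros n a Hc; inversion Hc as [? ? E'|? ? y'' ? E' Hc']; rewrite E in E'; try discriminate.
    injection E' as <-; exact (H _ _ Hc').
Qed.

Lemma run_of_hom (g : Y -> delay A) : sum_coalg_hom delay_out s g -> forall y, run_of y (g y).
Proof.
  intros Hg y; destruct (g y) as [[n a]|] eqn:E; simpl.
  - revert y E; induction n as [|n IH]; intros y E; pose proof (Hg y) as Hy; rewrite E in Hy;
      simpl in Hy; destruct (s y) as [y'|a'] eqn:Es; try discriminate.
    + injection Hy as ->; constructor; exact Es.
    + injection Hy as Hy; econstructor; [exact Es | apply IH; symmetry; exact Hy].
  - intros n a Hc; induction Hc as [y a Es|n y y' a Es _ IH]; pose proof (Hg y) as Hy;
      rewrite E, Es in Hy; try discriminate.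
    injection Hy as Hy; exact (IH (eq_sym Hy)).
Qed.

Definition run (y : Y) : delay A := epsilon (inhabits None) (run_of y).

Lemma run_spec y : run_of y (run y).
Proof. exact (epsilon_spec _ _ (run_of_exists y)). Qed.

Lemma run_hom : sum_coalg_hom delay_out s run.
Proof.
  intro y; destruct (s y) as [y'|a] eqn:E.
  - rewrite (run_of_functional _ _ _ (run_spec y) (run_of_later _ _ _ E (run_spec y'))).
    apply delay_out_later.
  - assert (Hy : run_of y (Some (0, a))) by (constructor; exact E).
    rewrite (run_of_functional _ _ _ (run_spec y) Hy); reflexivity.
Qed.

End DelayFinal.

Lemma delay_final (A : Type) : sum_final (@delay_out A).
Proof.
  intros Y s; exists (run s); split; [apply run_hom|].
  intros g Hg y; apply (run_of_functional s y); [apply run_of_hom; exact Hg | apply run_spec].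
Qed.

Lemma Bmap_id {X Y : SSet} (t : Ty) (b : B X Y t) : Bmap (fun _ x => x) (fun _ y => y) t b = b.
Proof. destruct b, t; reflexivity. Qed.

Lemma BRmap_comp {X Y Y' Y'' : SSet} (g : forall t, Y t -> Y' t) (g' : forall t, Y' t -> Y'' t)
  (t : Ty) (r : BR X Y t) :
  BRmap (fun _ x => x) g' t (BRmap (fun _ x => x) g t r)
  = BRmap (fun _ x => x) (fun u y => g' u (g u y)) t r.
Proof. destruct t; reflexivity. Qed.

Lemma Bmap_comp {X Y Y' Y'' : SSet} (g : forall t, Y t -> Y' t) (g' : forall t, Y' t -> Y'' t)
  (t : Ty) (b : B X Y t) :
  Bmap (fun _ x => x) g' t (Bmap (fun _ x => x) g t b)
  = Bmap (fun _ x => x) (fun u y => g' u (g u y)) t b.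
Proof. destruct b, t; reflexivity. Qed.

Lemma BRmap_id_ext {X Y : SSet} (g : forall t, Y t -> Y t) (t : Ty) (r : BR X Y t) :
  (forall u y, g u y = y) -> BRmap (fun _ x => x) g t r = r.
Proof.
  intros Hg; destruct t; [reflexivity|].
  apply functional_extensionality; intro; apply Hg.
Qed.

Lemma locally_final_endo_id {C : SSet} (c : HCoalg C) (k : forall t, C t -> C t) :
  locally_final c -> is_Bcoalg_hom c c k -> forall t x, k t x = x.
Proof.
  intros Hc Hk t x; destruct (Hc C c) as [h [_ Hu]].
  rewrite (Hu k Hk), (Hu (fun _ y => y)); [reflexivity|].
  intros u y; symmetry; apply Bmap_id.
Qed.

Section SortOfLocallyFinal.
Context {C : SSet} (c : HCoalg C) (Hc : locally_final c) (t : Ty) {X : Type}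
  (s : X -> X + BR C C t).

(* Corecursion at the single sort [t]: adjoin the states of [s] to [C] at sort [t]. *)
Definition adjoin_sort : SSet := fun u => (C u + (t = u) * X)%type.

Definition adjoin_inl : forall u, C u -> adjoin_sort u := fun u y => inl y.

Definition adjoin_coalg (u : Ty) (w : adjoin_sort u) : B C adjoin_sort u :=
  match w with
  | inl y => Bmap (fun _ x => x) adjoin_inl u (c u y)
  | inr (e, x) =>
      match e in _ = u0 return B C adjoin_sort u0 with
      | eq_refl =>
          match s x with
          | inl x' => inl (inr (eq_refl, x'))
          | inr r => inr (BRmap (fun _ x => x) adjoin_inl t r)
          end
      end
  end.

Definition adjoin_extend (f : X -> C t) (u : Ty) (w : adjoin_sort u) : C u :=
  match w with
  | inl y => y
  | inr (e, x) => match e in _ = u0 return C u0 with eq_refl => f x end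
  end.

Lemma adjoin_extend_hom (f : X -> C t) :
  sum_coalg_hom (c t) s f -> is_Bcoalg_hom c adjoin_coalg (adjoin_extend f).
Proof.
  intros Hf u [y|[e x]]; simpl.
  - rewrite Bmap_comp; symmetry; apply Bmap_id.
  - destruct e; rewrite Hf; destruct (s x); [reflexivity|].
    simpl; rewrite BRmap_comp, BRmap_id_ext by reflexivity; reflexivity.
Qed.

Lemma sum_final_sort_for :
  exists f, sum_coalg_hom (c t) s f /\ forall g, sum_coalg_hom (c t) s g -> forall x, g x = f x.
Proof.
  destruct (Hc adjoin_sort adjoin_coalg) as [h [Hh Hu]].
  assert (Hinl : forall u y, h u (inl y) = y).
  { apply (locally_final_endo_id c (fun u y => h u (inl y)) Hc).
    intros u y; rewrite Hh; simpl; apply Bmap_comp. }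
  exists (fun x => h t (inr (eq_refl, x))); split.
  - intro x; rewrite Hh; simpl; destruct (s x); [reflexivity|].
    cbn [Bmap]; rewrite BRmap_comp, BRmap_id_ext; [reflexivity | exact Hinl].
  - intros g Hg x.
    exact (Hu _ (adjoin_extend_hom g Hg) t (inr (eq_refl, x))).
Qed.

End SortOfLocallyFinal.

Lemma sum_final_sort {C : SSet} (c : HCoalg C) (Hc : locally_final c) (t : Ty) : sum_final (c t).
Proof. intros X s; exact (sum_final_sort_for c Hc t s). Qed.

Section LocallyFinalOfSorts.
Context {C : SSet} (c : HCoalg C) (Hs : forall t, sum_final (c t)) {D : SSet}
  (d : forall t, D t -> B C D t).

Fixpoint sort_unfold (t : Ty) : D t -> C t :=
  sum_corec (Hs t) (fun x => map_inr (BRmap (fun _ x => x) sort_unfold t) (d t x)).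

Lemma sort_unfold_hom : is_Bcoalg_hom c d sort_unfold.
Proof.
  intros t x; destruct t; simpl; rewrite sum_corec_hom; destruct (d _ x); reflexivity.
Qed.

Lemma sort_unfold_unique (h : forall t, D t -> C t) :
  is_Bcoalg_hom c d h -> forall t x, h t x = sort_unfold t x.
Proof.
  intros Hh t; induction t as [|t1 _ t2 IH]; simpl; apply sum_corec_unique; intro x;
    rewrite Hh; destruct (d _ x) as [y|r]; try reflexivity.
  simpl; f_equal; apply functional_extensionality; intro; apply IH.
Qed.

End LocallyFinalOfSorts.

Lemma locally_final_of_sorts {C : SSet} (c : HCoalg C) :
  (forall t, sum_final (c t)) -> locally_final c.
Proof.
  intros Hs D d; exists (sort_unfold c Hs d); split.
  - apply sort_unfold_hom.
  - apply sort_unfold_unique.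
Qed.

Section LocallyFinalIso.
Context {C C' : SSet} (c : HCoalg C) (c' : HCoalg C') (Hc : locally_final c)
  (Hc' : locally_final c').

Fixpoint iso_pair (t : Ty) : (C t -> C' t) * (C' t -> C t) :=
  (sum_corec (sum_final_sort c' Hc' t)
     (fun x => map_inr (BRmap (fun u => snd (iso_pair u)) (fun u => fst (iso_pair u)) t) (c t x)),
   sum_corec (sum_final_sort c Hc t)
     (fun y => map_inr (BRmap (fun u => fst (iso_pair u)) (fun u => snd (iso_pair u)) t) (c' t y))).

Definition iso_to (t : Ty) : C t -> C' t := fst (iso_pair t).
Definition iso_from (t : Ty) : C' t -> C t := snd (iso_pair t).

Lemma iso_pair_inverse t :
  (forall x, iso_from t (iso_to t x) = x) /\ (forall y, iso_to t (iso_from t y) = y).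
Proof.
  unfold iso_from, iso_to.
  induction t as [|t1 [IH1 IH1'] t2 [IH2 IH2']]; split; apply sum_corec_inverse;
    intro r; try reflexivity;
    apply functional_extensionality; intro; simpl; rewrite ?IH1, ?IH1', ?IH2, ?IH2'; reflexivity.
Qed.

Lemma iso_to_hom t x : c' t (iso_to t x) = Bmap iso_from iso_to t (c t x).
Proof.
  destruct t; unfold iso_to; simpl; rewrite sum_corec_hom; destruct (c _ x); reflexivity.
Qed.

Lemma locally_final_iso : exists f g, hcoalg_iso c c' f g.
Proof.
  exists iso_to, iso_from; split; [|split].
  - intros t; apply iso_pair_inverse.
  - intros t; apply iso_pair_inverse.
  - apply iso_to_hom.
Qed.

End LocallyFinalIso.

Fixpoint Z (t : Ty) : Type := delay (BR Z Z t).

(* [Z t] unfolds to [delay (BR Z Z t)] only once [t] is a constructor, hence the match. *)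
Definition z (t : Ty) : Z t -> B Z Z t :=
  match t as t0 return Z t0 -> B Z Z t0 with
  | Tunit => delay_out
  | Tarr _ _ => delay_out
  end.

Lemma z_locally_final : locally_final z.
Proof. apply locally_final_of_sorts; intros []; apply delay_final. Qed.

Definition later (t : Ty) : Z t -> Z t :=
  match t as t0 return Z t0 -> Z t0 with
  | Tunit => delay_later
  | Tarr _ _ => delay_later
  end.

Definition never (t : Ty) : Z t :=
  match t as t0 return Z t0 with Tunit => None | Tarr _ _ => None end.

Lemma z_later t w : z t (later t w) = inl w.
Proof. destruct t; apply delay_out_later. Qed.

Lemma z_never t : z t (never t) = inl (never t).
Proof. destruct t; reflexivity. Qed.

(* The extra [later] is the silent step [p q -> p' q] or [p q -> p'] of the application
   itself. *)
Definition app_Z (t1 t2 : Ty) (p : Z (Tarr t1 t2)) (q : Z t1) : Z t2 :=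
  match p with
  | None => never t2
  | Some (n, g) => Nat.iter (S n) (later t2) (g q)
  end.

Lemma z_app_Z t1 t2 p q :
  z t2 (app_Z t1 t2 p q) =
  match z (Tarr t1 t2) p with inl p' => inl (app_Z t1 t2 p' q) | inr g => inl (g q) end.
Proof.
  destruct p as [[[|n] g]|]; simpl.
  - apply z_later.
  - apply z_later.
  - apply z_never.
Qed.

Definition alg_Z : Alg Z := fun t s =>
  match s in Sig _ t0 return Z t0 with
  | Se => Some (0, tt)
  | @Sapp _ t1 t2 p q => app_Z t1 t2 p q
  | SS t1 t2 t3 => Some (0, fun p => Some (0, fun q => Some (0, fun u =>
        app_Z t2 t3 (app_Z t1 (Tarr t2 t3) p u) (app_Z t1 t2 q u))))
  | @SS1 _ t1 t2 t3 p => Some (0, fun q => Some (0, fun u =>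
        app_Z t2 t3 (app_Z t1 (Tarr t2 t3) p u) (app_Z t1 t2 q u)))
  | @SS2 _ t1 t2 t3 p q => Some (0, fun u =>
        app_Z t2 t3 (app_Z t1 (Tarr t2 t3) p u) (app_Z t1 t2 q u))
  | SK t1 t2 => Some (0, fun p => Some (0, fun _ => p))
  | SK1 t2 p => Some (0, fun _ => p)
  | SI t => Some (0, fun p => p)
  end.

Lemma alg_Z_rho_bialgebra : is_rho_bialgebra alg_Z z.
Proof.
  intros t s; destruct s as [|t1 t2 p q| | | | | |]; try reflexivity.
  cbn [alg_Z Sig_map rho]; rewrite z_app_Z; destruct (z (Tarr t1 t2) p); reflexivity.
Qed.

Definition terminal (t : Ty) : Tr t -> Prop :=
  match t as t0 return Tr t0 -> Prop with
  | Tunit => fun p => p = Te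
  | Tarr _ _ => fun p => forall u, exists p', lstep p u p'
  end.

Lemma progress t (p : Tr t) : (exists p', tstep p p') \/ terminal t p.
Proof.
  induction p as [t []| |t1 t2 p [[p' Hp]|Hp] q _| | | | | |];
    try (right; reflexivity); try (right; intro; eexists; constructor); left.
  - eexists; apply tstep_app1; exact Hp.
  - destruct (Hp q) as [p' Hpq]; eexists; apply tstep_app2; exact Hpq.
Qed.

Fixpoint closed_inhabitant (t : Ty) : Tr t :=
  match t as t0 return Tr t0 with
  | Tunit => Te
  | Tarr t1 t2 => TK1 t1 (closed_inhabitant t2)
  end.

Section Adequacy.
Variable h : forall t, Tr t -> Z t.
Hypothesis Hh : is_alg_hom (op Void) alg_Z h.

Ltac rewrite_hom s :=
  let E := fresh in pose proof (Hh _ s) as E; cbn [op] in E; rewrite E; clear E.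

Lemma h_app t1 t2 (p : Tr (Tarr t1 t2)) q : h t2 (Tapp p q) = app_Z t1 t2 (h _ p) (h _ q).
Proof. exact (Hh _ (Sapp p q)). Qed.

Lemma lstep_z t1 t2 (p : Tr (Tarr t1 t2)) u p' :
  lstep p u p' -> exists g, z (Tarr t1 t2) (h _ p) = inr g /\ g (h _ u) = h _ p'.
Proof.
  destruct 1;
    [ rewrite_hom (@SS Tr t1 t2 t3) | rewrite_hom (SS1 p) | rewrite_hom (SS2 p q)
    | rewrite_hom (@SK Tr t1 t2) | rewrite_hom (SK1 t2 p) | rewrite_hom (@SI Tr t) ];
    eexists; split; try reflexivity; simpl.
  - symmetry; exact (Hh _ (SS1 u)).
  - symmetry; exact (Hh _ (SS2 p u)).
  - rewrite !h_app; reflexivity.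
  - symmetry; exact (Hh _ (SK1 t2 u)).
Qed.

Lemma tstep_z t (p p' : Tr t) : tstep p p' -> z t (h t p) = inl (h t p').
Proof.
  induction 1 as [t1 t2 p p' q _ IH|t1 t2 p q p' Hl].
  - rewrite !h_app, z_app_Z, IH; reflexivity.
  - destruct (lstep_z _ _ _ _ _ Hl) as [g [Hg Hgp]].
    rewrite h_app, z_app_Z, Hg, Hgp; reflexivity.
Qed.

Lemma z_h_Te : z Tunit (h Tunit Te) = inr tt.
Proof. rewrite_hom (@Se Tr); reflexivity. Qed.

Lemma terminal_z t (q : Tr t) (Hq : terminal t q) : exists r, z t (h t q) = inr r.
Proof.
  destruct t as [|t1 t2]; simpl in Hq.
  - subst; rewrite z_h_Te; eauto.
  - destruct (Hq (closed_inhabitant t1)) as [q' Hl].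
    destruct (lstep_z _ _ _ _ _ Hl) as [g [Hg _]]; eauto.
Qed.

Lemma kernel_is_sab : is_sab (fun t p q => h t p = h t q).
Proof.
  split; [|split; [|split]].
  - intro t; split; intro; intros; congruence.
  - intros t p q p' Hpq Hp.
    pose proof (tstep_z _ _ _ Hp) as Ep; rewrite Hpq in Ep.
    destruct (progress t q) as [[q' Hq]|Hq].
    + exists q'; split; [exact Hq|].
      rewrite (tstep_z _ _ _ Hq) in Ep; injection Ep; auto.
    + destruct (terminal_z t q Hq) as [r Er]; congruence.
  - intros p q Hpq Hok; inversion Hok; subst; destruct (progress Tunit q) as [[q' Hq]|Hq].
    + pose proof (tstep_z _ _ _ Hq) as Eq; rewrite <- Hpq, z_h_Te in Eq; discriminate.
    + simpl in Hq; subst; constructor.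
  - intros t1 t2 p q u p' Hpq Hp.
    destruct (lstep_z _ _ _ _ _ Hp) as [g [Hg Hgp]].
    destruct (progress _ q) as [[q' Hq]|Hq].
    + pose proof (tstep_z _ _ _ Hq) as Eq; rewrite <- Hpq, Hg in Eq; discriminate.
    + destruct (Hq u) as [q' Hl]; exists q'; split; [exact Hl|].
      destruct (lstep_z _ _ _ _ _ Hl) as [g' [Hg' Hgq]].
      rewrite <- Hpq, Hg in Hg'; injection Hg' as <-; congruence.
Qed.

End Adequacy.

Theorem theorem5p2 :
  exists (Z : SSet) (z : HCoalg Z),
    locally_final z /\
    (forall (Z' : SSet) (z' : HCoalg Z'), locally_final z' ->
       exists (f : forall t, Z t -> Z' t) (g : forall t, Z' t -> Z t), hcoalg_iso z z' f g) /\
    exists a : Alg Z,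
      is_rho_bialgebra a z /\
      forall h : forall t, Tr t -> Z t,
        is_alg_hom (op Void) a h ->
        forall (t : Ty) (p q : Tr t), h t p = h t q -> sab_sim t p q.
Proof.
  exists Z, z; split; [exact z_locally_final|split].
  - intros Z' z' Hz'; exact (locally_final_iso z z' z_locally_final Hz').
  - exists alg_Z; split; [exact alg_Z_rho_bialgebra|].
    intros h Hh t p q Epq; exists (fun t p q => h t p = h t q); split.
    + exact (kernel_is_sab h Hh).
    + exact Epq.
Qed.
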